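(* Let $n\ge 2$ and let $\mathcal{F}$ be a maximal coclique of $\Gamma_{2n}$. Any two $\mathcal{F}$-red $(n-1)$-spaces meet (have nonempty intersection). Any two $\mathcal{F}$-red $n$-spaces are not in general position, i.e. they do not meet in just a point.
   Context: $\mathrm{PG}(2n,q)$ is the projective space of projective dimension $2n$ over the field of order $q$; an $i$-space is a subspace of projective dimension $i$. An $(n-1,n)$-flag is a pair $(A,B)$ with $A$ an $(n-1)$-space, $B$ an $n$-space and $A\subseteq B$. Two such flags $(A_1,B_1),(A_2,B_2)$ are opposite if $A_1\cap B_2=A_2\cap B_1=\emptyset$. $\Gamma_{2n}$ is the graph whose vertices are the $(n-1,n)$-flags, adjacent when opposite; a maximal coclique is an inclusion-maximal set of pairwise non-opposite flags. An $n$-space or $(n-1)$-space is $\mathcal{F}$-red if it occurs in exactly $\frac{q^{n+1}-1}{q-1}$ flags of $\mathcal{F}$. Two $n$-spaces of $\mathrm{PG}(2n,q)$ are in general position if they span the whole space, equivalently meet in exactly a point. *)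

From HB Require Import structures.
From mathcomp Require Import all_boot all_algebra all_field.

Set Implicit Arguments.
Unset Strict Implicit.
Unset Printing Implicit Defensive.

Local Open Scope ring_scope.

(* Conventions: PG(2n,q) is modelled by the vector space 'rV[F]_(2n+1) over a
   finite field F with q = #|F| elements.  A projective i-space is a vector
   subspace of dimension i+1 ({vspace _} from mathcomp's vector.v). *)

(* The type of all subspaces of 'rV[F]_N, equipped with a finType structure
   (transported from the canonical matrix representation), so that sets of
   flags can be formed and counted. *)
Definition subsp (F : finFieldType) (N : nat) : Type := {vspace 'rV[F]_N}.
HB.instance Definition _ (F : finFieldType) (N : nat) := Choice.on (subsp F N).

Definition vs2mx_subsp (F : finFieldType) (N : nat) :
  subsp F N -> 'M[F]_(dim 'rV[F]_N) := @VectorInternalTheory.vs2mx F 'rV[F]_N.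
Definition mx2vs_subsp (F : finFieldType) (N : nat) :
  'M[F]_(dim 'rV[F]_N) -> subsp F N := @VectorInternalTheory.mx2vs F 'rV[F]_N _.
Lemma subspK (F : finFieldType) (N : nat) :
  cancel (@vs2mx_subsp F N) (@mx2vs_subsp F N).
Proof. exact: VectorInternalTheory.vs2mxK. Qed.

HB.instance Definition _ (F : finFieldType) (N : nat) := CanIsCountable (@subspK F N).
HB.instance Definition _ (F : finFieldType) (N : nat) :=
  isFinite.Build (subsp F N) (@pcan_enumP (subsp F N) _ _ _ (can_pcan (@subspK F N))).

Notation pgsp F n := (subsp F n.*2.+1).

Definition is_flag (F : finFieldType) (n : nat) (f : pgsp F n * pgsp F n) : bool :=
  [&& \dim f.1 == n, \dim f.2 == n.+1 & (f.1 <= f.2)%VS].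

Definition opposite (F : finFieldType) (n : nat) (f g : pgsp F n * pgsp F n) : bool :=
  ((f.1 :&: g.2)%VS == 0%VS) && ((g.1 :&: f.2)%VS == 0%VS).

Definition coclique (F : finFieldType) (n : nat) (FF : {set pgsp F n * pgsp F n}) : Prop :=
  (forall f, f \in FF -> is_flag f) /\
  (forall f g, f \in FF -> g \in FF -> ~~ opposite f g).

Definition maximal_coclique (F : finFieldType) (n : nat)
    (FF : {set pgsp F n * pgsp F n}) : Prop :=
  coclique FF /\ (forall GG, coclique GG -> FF \subset GG -> GG = FF).

Definition redcount (F : finFieldType) (n : nat) : nat :=
  ((#|F| ^ n.+1 - 1) %/ (#|F| - 1))%N.

Definition red_nspace (F : finFieldType) (n : nat) (FF : {set pgsp F n * pgsp F n})
    (B : pgsp F n) : Prop :=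
  \dim B = n.+1 /\ #|[set f in FF | f.2 == B]| = redcount F n.

Definition red_n1space (F : finFieldType) (n : nat) (FF : {set pgsp F n * pgsp F n})
    (A : pgsp F n) : Prop :=
  \dim A = n /\ #|[set f in FF | f.1 == A]| = redcount F n.

From HB Require Import structures.
From mathcomp Require Import all_boot all_algebra all_field zify.

Set Implicit Arguments.
Unset Strict Implicit.
Unset Printing Implicit Defensive.

Import GRing.Theory.
Local Open Scope ring_scope.

(* If A1 is F-red, F contains (q^(n+1)-1)/(q-1) flags (A1, B). When A1 and an
   (n-1)-space A2 are disjoint, those B meeting A2 are of the form A1 + <a>
   with <a> a point of A2, so at most (q^n-1)/(q-1) of them exist. Hence two
   disjoint red (n-1)-spaces A1, A2 would give flags (A1, B1), (A2, B2) in F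
   with B1 /\ A2 = B2 /\ A1 = 0, i.e. two opposite flags. Dually, if two red
   n-spaces met in a single point <v>, then, as at most (q^n-1)/(q-1)
   hyperplanes of B1 contain v, F contains flags (A1, B1) and (A2, B2) with
   v outside A1 and A2; then A1 /\ B2 <= B1 /\ B2 = <v> forces A1 /\ B2 = 0,
   likewise A2 /\ B1 = 0, and again the two flags are opposite. Both counts
   bound the number of classes of nonzero vectors up to scalars: points of A2,
   and nonzero coordinate forms on B1 vanishing at v. *)

Lemma redcount_mul (F : finFieldType) n :
  (redcount F n * (#|F| - 1) = #|F| ^ n.+1 - 1)%N.
Proof.
rewrite /redcount divnK //.
by have := subn_exp #|F| 1 n.+1; rewrite exp1n => ->; apply: dvdn_mulr.
Qed.

Section ScaleInvariantImage.

Variables (F : finFieldType) (V : finLmodType F) (rT : finType).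
Variables (D : {set V}) (g : V -> rT).
Hypothesis D_neq0 : 0 \notin D.
Hypothesis scale_in_D : forall a t, a != 0 -> t \in D -> a *: t \in D.
Hypothesis g_scale : forall a t, a != 0 -> t \in D -> g (a *: t) = g t.

Lemma card_scale_invariant_image : (#|g @: D| * #|F|.-1 <= #|D|)%N.
Proof.
have fiber_ge t : t \in D -> (#|F|.-1 <= #|[set u in D | g u == g t]|)%N.
  move=> tD; have t_neq0 : t != 0 by apply: contraNneq D_neq0 => <-.
  rewrite -(cardsC1 (0 : F)) -(@card_in_imset _ _ (fun a => a *: t)).
    apply/subset_leq_card/subsetP => u /imsetP[a]; rewrite !inE => a_neq0 ->.
    rewrite scale_in_D //= g_scale // eqxx.
  move=> a b _ _ /= /eqP; rewrite -subr_eq0 -scalerBl scaler_eq0 (negbTE t_neq0).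
  by rewrite orbF subr_eq0 => /eqP.
have -> : #|D| = (\sum_(y in g @: D) #|[set u in D | g u == y]|)%N.
  rewrite -sum1_card (partition_big_imset g).
  by apply: eq_bigr => y _; rewrite -sum1_card; apply: eq_bigl => u; rewrite inE.
rewrite -sum_nat_const; apply: leq_sum => y /imsetP[t tD ->]; exact: fiber_ge.
Qed.

Lemma exists_notin_scale_invariant_image n (X : {set rT}) :
  #|X| = redcount F n -> (#|D| < #|F| ^ n.+1 - 1)%N ->
  exists2 y, y \in X & y \notin g @: D.
Proof.
move=> cardX cardD; apply/subsetPn; apply: contraTN cardD => /subset_leq_card.
rewrite -leqNgt cardX -redcount_mul subn1 => le_red.
exact: leq_trans (leq_mul le_red (leqnn _)) card_scale_invariant_image.
Qed.

End ScaleInvariantImage.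

Section Subspaces.

Variables (K : fieldType) (vT : vectType K).
Implicit Types (A B C U : {vspace vT}) (v : vT).

Lemma vlineZ a v : a != 0 -> <[a *: v]>%VS = <[v]>%VS.
Proof.
move=> a_neq0; apply: subv_anti; rewrite -!memvE memvZ ?memv_line //=.
by have := memvZ a^-1 (memv_line (a *: v)); rewrite scalerA mulVf // scale1r.
Qed.

Lemma addv_line_eq A B v :
  (A <= B)%VS -> \dim B = (\dim A).+1 -> v \in B -> v \notin A -> (A + <[v]>)%VS = B.
Proof.
move=> sAB dimB vB vA; apply/eqP; rewrite eqEdim subv_add sAB -memvE vB dimB /=.
rewrite (ltn_leqif (dimv_leqif_sup (addvSl A <[v]>))).
by apply: contra vA => /subvP; apply; apply: subvP (addvSr A _) _ (memv_line v).
Qed.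

Lemma subv_line_eq0 U v : (U <= <[v]>)%VS -> v \notin U -> U = 0%VS.
Proof.
move=> sUv vU; apply/eqP; rewrite -subv0; apply/subvP => w wU.
have /vlineP[k def_w] := subvP sUv w wU; rewrite memv0 def_w.
have [-> | k_neq0] := eqVneq k 0; first by rewrite scale0r.
by move: vU; rewrite -(scalerK k_neq0 v) -def_w memvZ.
Qed.

Lemma capv_eq0_of_line A B C v :
  (A <= B)%VS -> (B :&: C)%VS = <[v]>%VS -> v \notin A -> (A :&: C)%VS = 0%VS.
Proof.
move=> sAB BC_line vA; apply: (subv_line_eq0 (v := v)).
  by rewrite -BC_line capvS.
by apply: contra vA => /memv_capP[].
Qed.

Lemma dimv1_line U : \dim U = 1%N -> U = <[vpick U]>%VS.
Proof.
move=> dimU; have pick_neq0 : vpick U != 0.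
  by rewrite vpick0 -dimv_eq0 dimU.
by apply/esym/eqP; rewrite eqEdim -memvE memv_pick dimU dim_vline pick_neq0.
Qed.

End Subspaces.

Section CoordinateHyperplanes.

Variables (K : fieldType) (vT : vectType K) (B : {vspace vT}).
Implicit Types (c : 'rV[K]_(\dim B)) (A : {vspace vT}) (y : vT).

Definition coord_lform c : 'Hom(vT, K^o) :=
  \sum_i c 0 i *: linfun (coord (vbasis B) i : vT -> K^o).

Lemma coord_lformE c y : coord_lform c y = \sum_i c 0 i * coord (vbasis B) i y.
Proof.
by rewrite sum_lfunE; apply: eq_bigr => i _; rewrite scale_lfunE lfunE.
Qed.

Lemma coord_lformZ a c y : coord_lform (a *: c) y = a * coord_lform c y.
Proof.
by rewrite !coord_lformE mulr_sumr; apply: eq_bigr => i _; rewrite mxE mulrA.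
Qed.

Lemma coord_lform_vbasis c (j : 'I_(\dim B)) : coord_lform c (vbasis B)`_j = c 0 j.
Proof.
have freeB : free (vbasis B) := basis_free (vbasisP B).
rewrite coord_lformE (bigD1 j) //= big1 => [|i /negPf neq_ij].
  by rewrite coord_free // eqxx mulr1 addr0.
by rewrite coord_free // eq_sym neq_ij mulr0.
Qed.

Lemma coord_lform_delta j y : coord_lform (delta_mx 0 j) y = coord (vbasis B) j y.
Proof.
rewrite coord_lformE (bigD1 j) //= big1 => [|i /negPf neq_ij].
  by rewrite mxE !eqxx mul1r addr0.
by rewrite mxE neq_ij andbF mul0r.
Qed.

Lemma exists_coord_lform_neq0 y :
  y \in B -> y != 0 -> exists2 c, c != 0 & coord_lform c y != 0.
Proof.
move=> yB y_neq0; have [j yj_neq0] : exists j, coord (vbasis B) j y != 0.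
  apply/existsP; apply: contraR y_neq0 => /existsPn yj_eq0.
  rewrite (coord_vbasis yB); apply/eqP/big1 => j _.
  by move/negPn/eqP: (yj_eq0 j) => ->; rewrite scale0r.
exists (delta_mx 0 j); last by rewrite coord_lform_delta.
by apply/eqP => /matrixP/(_ 0 j)/eqP; rewrite !mxE !eqxx oner_eq0.
Qed.

Definition hyperplane c := (B :&: lker (coord_lform c))%VS.

Lemma mem_hyperplane c y : (y \in hyperplane c) = (y \in B) && (coord_lform c y == 0).
Proof. by rewrite memv_cap memv_ker. Qed.

Lemma hyperplaneZ a c : a != 0 -> hyperplane (a *: c) = hyperplane c.
Proof.
move=> a_neq0; apply/vspaceP => y.
by rewrite !mem_hyperplane coord_lformZ mulf_eq0 (negbTE a_neq0).
Qed.

Lemma dim_hyperplane_lt c : c != 0 -> (\dim (hyperplane c) < \dim B)%N.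
Proof.
move=> c_neq0; have [j cj_neq0] : exists j, c 0 j != 0.
  apply/existsP; apply: contraR c_neq0; rewrite negb_exists => /forallP c_eq0.
  by apply/eqP/rowP => j; rewrite mxE; apply/eqP; rewrite -[_ == _]negbK c_eq0.
rewrite (ltn_leqif (dimv_leqif_sup (capvSl _ _))); apply/subvPn.
exists (vbasis B)`_j; first by rewrite vbasis_mem ?mem_nth ?size_tuple.
by rewrite mem_hyperplane coord_lform_vbasis (negbTE cj_neq0) andbF.
Qed.

Lemma hyperplane_onto A :
  (A <= B)%VS -> (\dim A).+1 = \dim B -> exists2 c, c != 0 & hyperplane c = A.
Proof.
move=> sAB dimA.
pose M := \matrix_(i < \dim B, j < \dim A) coord (vbasis B) i (vbasis A)`_j.
have kerM_neq0 : kermx M != 0.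
  by rewrite -mxrank_eq0 mxrank_ker; have := rank_leq_col M; lia.
pose c := nz_row (kermx M).
have c_neq0 : c != 0 by rewrite nz_row_eq0.
have cM : c *m M = 0 by apply/sub_kermxP; apply: nz_row_sub.
have sAc : (A <= hyperplane c)%VS.
  rewrite -(span_basis (vbasisP A)); apply/span_subvP => _ /(nthP 0)[j ltj <-].
  rewrite size_tuple in ltj.
  rewrite mem_hyperplane (subvP sAB) ?vbasis_mem ?mem_nth ?size_tuple //=.
  have /rowP/(_ (Ordinal ltj)) := cM; rewrite !mxE => cMj.
  by apply/eqP; rewrite coord_lformE -[RHS]cMj; apply: eq_bigr => i _; rewrite mxE.
exists c => //; apply/esym/eqP; rewrite eqEdim sAc /=.
by have := dim_hyperplane_lt c_neq0; rewrite -dimA.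
Qed.

End CoordinateHyperplanes.

Arguments coord_lform {K vT} B c.
Arguments hyperplane {K vT} B c.

Section RedSpaces.

Variables (F : finFieldType) (n : nat) (FF : {set pgsp F n * pgsp F n}).
Hypothesis flagFF : forall f, f \in FF -> is_flag f.

Lemma red_n1space_avoiding_flag (A1 A2 : pgsp F n) :
  red_n1space FF A1 -> \dim A2 = n -> (A1 :&: A2)%VS = 0%VS ->
  exists2 f, f \in FF & f.1 = A1 /\ (f.2 :&: A2)%VS = 0%VS.
Proof.
move=> [dimA1 redA1] dimA2 A12_eq0.
pose D := [set a : 'rV[F]_(n.*2.+1) | (a \in A2) && (a != 0)].
pose g a : pgsp F n * pgsp F n := (A1, (A1 + <[a]>)%VS).
have D_neq0 : 0 \notin D by rewrite inE eqxx andbF.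
have scale_in_D a t : a != 0 -> t \in D -> a *: t \in D.
  by move=> a_neq0; rewrite !inE scaler_eq0 negb_or a_neq0 => /andP[/(memvZ a) -> ->].
have g_scale a t : a != 0 -> t \in D -> g (a *: t) = g t.
  by move=> a_neq0 _; rewrite /g vlineZ.
have cardD : (#|D| < #|F| ^ n.+1 - 1)%N.
  have : (#|D| < #|A2|)%N.
    apply/proper_card/properP; split; last by exists 0; rewrite ?mem0v.
    by apply/subsetP => a; rewrite inE => /andP[].
  have := ltn_exp2l n n.+1 (finNzRing_gt1 F); rewrite ltnSn card_vspace dimA2.
  by move: (#|F| ^ n)%N (#|F| ^ n.+1)%N => x y; lia.
have [[A B] /setIdP[fFF /eqP /= eqA] gDf] :=
  exists_notin_scale_invariant_image D_neq0 scale_in_D g_scale redA1 cardD.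
subst A; exists (A1, B) => //; split => //=; apply/eqP; apply: contraNT gDf => BA2.
have /and3P[_ /eqP dimB sA1B] := flagFF fFF.
have /memv_capP[aB aA2] := memv_pick (B :&: A2)%VS.
have a_neq0 : vpick (B :&: A2)%VS != 0 by rewrite vpick0.
apply/imsetP; exists (vpick (B :&: A2)%VS); first by rewrite inE aA2 a_neq0.
rewrite /g (addv_line_eq sA1B) ?dimB ?dimA1 //.
by apply: contra a_neq0 => aA1; rewrite -memv0 -A12_eq0 memv_cap aA1.
Qed.

Lemma red_nspace_avoiding_flag (B1 : pgsp F n) v :
  red_nspace FF B1 -> v \in B1 -> v != 0 ->
  exists2 f, f \in FF & f.2 = B1 /\ v \notin f.1.
Proof.
move=> [dimB1 redB1] vB1 v_neq0.
pose D := [set c : 'rV[F]_(\dim B1) | (c != 0) && (coord_lform B1 c v == 0)].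
pose g c : pgsp F n * pgsp F n := (hyperplane B1 c, B1).
have D_neq0 : 0 \notin D by rewrite inE eqxx.
have scale_in_D a c : a != 0 -> c \in D -> a *: c \in D.
  move=> a_neq0; rewrite !inE scaler_eq0 negb_or a_neq0 coord_lformZ.
  by move=> /andP[c_neq0 /eqP->]; rewrite c_neq0 mulr0 eqxx.
have g_scale a c : a != 0 -> c \in D -> g (a *: c) = g c.
  by move=> a_neq0 _; rewrite /g hyperplaneZ.
have cardD : (#|D| < #|F| ^ n.+1 - 1)%N.
  have [c c_neq0 cv_neq0] := exists_coord_lform_neq0 vB1 v_neq0.
  have : (#|D| < #|[set~ 0%R : 'rV[F]_(\dim B1)]|)%N.
    apply/proper_card/properP; split; last by exists c; rewrite !inE ?c_neq0 ?negbTE.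
    by apply/subsetP => d; rewrite !inE => /andP[].
  by rewrite cardsC1 card_mx mul1n -dimB1 subn1.
have [[A B] /setIdP[fFF /eqP /= eqB] gDf] :=
  exists_notin_scale_invariant_image D_neq0 scale_in_D g_scale redB1 cardD.
subst B; exists (A, B1) => //; split => //=; apply: contra gDf => vA.
have /and3P[/eqP /= dimA _ sAB1] := flagFF fFF.
have [c c_neq0 def_A] := hyperplane_onto sAB1 (etrans (congr1 S dimA) (esym dimB1)).
apply/imsetP; exists c; last by rewrite /g def_A.
by move: vA; rewrite -def_A mem_hyperplane inE c_neq0 => /andP[].
Qed.

End RedSpaces.

Section RedSpacesOfCocliques.

Variables (F : finFieldType) (n : nat) (FF : {set pgsp F n * pgsp F n}).
Hypothesis cocliqueFF : coclique FF.

Lemma red_n1spaces_meet (A1 A2 : pgsp F n) :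
  red_n1space FF A1 -> red_n1space FF A2 -> (A1 :&: A2)%VS != 0%VS.
Proof.
have [flagFF not_opp] := cocliqueFF.
move=> redA1 redA2; apply/eqP => A12_eq0.
have [f1 f1FF [f1_bot f1_top]] :=
  red_n1space_avoiding_flag flagFF redA1 (proj1 redA2) A12_eq0.
have [f2 f2FF [f2_bot f2_top]] :=
  red_n1space_avoiding_flag flagFF redA2 (proj1 redA1) (etrans (capvC _ _) A12_eq0).
have := not_opp f1 f2 f1FF f2FF.
by rewrite /opposite f1_bot f2_bot (capvC A1) f2_top (capvC A2) f1_top eqxx.
Qed.

Lemma red_nspaces_not_general (B1 B2 : pgsp F n) :
  red_nspace FF B1 -> red_nspace FF B2 -> \dim (B1 :&: B2)%VS != 1%N.
Proof.
have [flagFF not_opp] := cocliqueFF.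
move=> redB1 redB2; apply/eqP => dimB12; have B12_line := dimv1_line dimB12.
set v := vpick _ in B12_line.
have v_neq0 : v != 0 by rewrite vpick0 -dimv_eq0 dimB12.
have /memv_capP[vB1 vB2] : v \in (B1 :&: B2)%VS by rewrite B12_line memv_line.
have [f1 f1FF [f1_top vf1]] := red_nspace_avoiding_flag flagFF redB1 vB1 v_neq0.
have [f2 f2FF [f2_top vf2]] := red_nspace_avoiding_flag flagFF redB2 vB2 v_neq0.
have /and3P[_ _ sf1] := flagFF _ f1FF; have /and3P[_ _ sf2] := flagFF _ f2FF.
rewrite f1_top in sf1; rewrite f2_top in sf2.
have B21_line : (B2 :&: B1)%VS = <[v]>%VS by rewrite capvC.
have := not_opp f1 f2 f1FF f2FF; rewrite /opposite f1_top f2_top.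
rewrite (capv_eq0_of_line sf1 B12_line vf1).
by rewrite (capv_eq0_of_line sf2 B21_line vf2) eqxx.
Qed.

End RedSpacesOfCocliques.

Theorem mainTheorem5 (F : finFieldType) (n : nat) (FF : {set pgsp F n * pgsp F n}) :
  (2 <= n)%N -> maximal_coclique FF ->
  (forall A1 A2 : pgsp F n, red_n1space FF A1 -> red_n1space FF A2 ->
     (A1 :&: A2)%VS != 0%VS) /\
  (forall B1 B2 : pgsp F n, red_nspace FF B1 -> red_nspace FF B2 ->
     \dim (B1 :&: B2)%VS != 1%N).
Proof.
move=> _ [cocliqueFF _].
by split; [exact: red_n1spaces_meet | exact: red_nspaces_not_general].
Qed.
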